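(* Let $G$ be a $\sigma$-compact locally compact Abelian group, $C>0$, let $\{P_\varepsilon\}_{0<\varepsilon<C}$ be a family of subsets of $G$ and $L\le G$ a subgroup satisfying (A1)–(A5) below. Then there is a unique Hausdorff-or-not group topology on $L$ for which $\{P_\varepsilon\}_{0<\varepsilon<C}$ is a neighbourhood basis of $0$; let $H$ be the (Hausdorff) completion of $L$ with respect to this (uniform) topology and $\phi: L\to H$ the completion map. Then $H$ is a locally compact Abelian group, the set $\widetilde{L}:=\{(t,\phi(t)) : t\in L\}$ is a lattice in $G\times H$, and $(G\times H,\widetilde{L})$ is a cut and project scheme, with $\pi_1(\widetilde L)=L$ and star map $\phi$. The conditions are: (A1) $0\in P_\varepsilon=-P_\varepsilon$ for all $0<\varepsilon<C$; (A2) each $P_\varepsilon$ ($0<\varepsilon<C$) is locally finite in $G$; (A3) $P_\varepsilon+P_{\varepsilon'}\subset P_{\varepsilon+\varepsilon'}$ whenever $\varepsilon,\varepsilon'>0$, $\varepsilon+\varepsilon'<C$; (A4) each $P_\varepsilon$ ($0<\varepsilon<C$) is relatively dense in $G$; (A5) $P_\varepsilon\subset L$ for all $0<\varepsilon<C$.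
   Context: A subset $A\subset G$ is locally finite if $A\cap K$ is finite for every compact $K$; relatively dense if $A+K=G$ for some compact $K$. A lattice in a locally compact Abelian group is a discrete subgroup that is relatively dense (equivalently, cocompact). A cut and project scheme $(G\times H,\widetilde L)$ consists of locally compact Abelian groups $G,H$ and a lattice $\widetilde L\subset G\times H$ such that the projection $\pi_1:G\times H\to G$ is injective on $\widetilde L$ and $\pi_2(\widetilde L)$ is dense in $H$; the star map $\star:\pi_1(\widetilde L)\to H$ is $x\mapsto x^\star:=\pi_2((\pi_1|_{\widetilde L})^{-1}(x))$. *)

From HB Require Import structures.
From mathcomp Require Import all_boot all_algebra.
From Stdlib Require Import Reals List.
Set Implicit Arguments. Unset Strict Implicit. Unset Printing Implicit Defensive.
Import GRing.Theory.
Local Open Scope ring_scope.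

Definition set (T : Type) := T -> Prop.

Definition is_topology_on (T : Type) (X : set T) (op : set T -> Prop) : Prop :=
  (forall U, op U -> forall x, U x -> X x) /\
  op X /\
  (forall (I : Type) (F : I -> set T), (forall i, op (F i)) ->
      op (fun x => exists i, F i x)) /\
  (forall U V, op U -> op V -> op (fun x => U x /\ V x)).

Definition is_topology (T : Type) (op : set T -> Prop) :=
  is_topology_on (fun _ => True) op.

Definition nbhd (T : Type) (op : set T -> Prop) (x : T) (U : set T) : Prop :=
  exists V, op V /\ V x /\ (forall y, V y -> U y).

Definition hausdorff (T : Type) (op : set T -> Prop) : Prop :=
  forall x y : T, x <> y ->
    exists U V, nbhd op x U /\ nbhd op y V /\ (forall z, U z -> V z -> False).

Definition compact (T : Type) (op : set T -> Prop) (K : set T) : Prop :=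
  forall (I : Type) (F : I -> set T), (forall i, op (F i)) ->
    (forall x, K x -> exists i, F i x) ->
    exists s : list I, forall x, K x -> exists i, List.In i s /\ F i x.

Definition locally_compact (T : Type) (op : set T -> Prop) : Prop :=
  forall x, exists K, compact op K /\ nbhd op x K.

Definition sigma_compact (T : Type) (op : set T -> Prop) : Prop :=
  exists K : nat -> set T, (forall n, compact op (K n)) /\ forall x, exists n, K n x.

Definition dense (T : Type) (op : set T -> Prop) (D : set T) : Prop :=
  forall U, op U -> (exists x, U x) -> exists x, U x /\ D x.

Definition prod_top (A B : Type) (opA : set A -> Prop) (opB : set B -> Prop)
  : set (A * B) -> Prop :=
  fun W => forall p, W p -> exists U V, opA U /\ opB V /\ U p.1 /\ V p.2 /\
     (forall a b, U a -> V b -> W (a, b)).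

Definition subgroup (G : zmodType) (L : set G) : Prop :=
  L 0 /\ forall x y, L x -> L y -> L (x - y).

Definition group_topology_on (G : zmodType) (L : set G) (op : set G -> Prop) : Prop :=
  is_topology_on L op /\
  (forall x y U, L x -> L y -> nbhd op (x + y) U ->
     exists V W, nbhd op x V /\ nbhd op y W /\
       forall a b, V a -> W b -> U (a + b)) /\
  (forall x U, L x -> nbhd op (- x) U ->
     exists V, nbhd op x V /\ forall a, V a -> U (- a)).

Definition group_topology (G : zmodType) (op : set G -> Prop) :=
  group_topology_on (fun _ => True) op.

Definition LCA_group (G : zmodType) (op : set G -> Prop) : Prop :=
  group_topology op /\ hausdorff op /\ locally_compact op.

Definition proper_filter (T : Type) (F : set T -> Prop) : Prop :=
  F (fun _ => True) /\
  (forall A B, F A -> (forall x, A x -> B x) -> F B) /\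
  (forall A B, F A -> F B -> F (fun x => A x /\ B x)) /\
  ~ F (fun _ => False).

Definition cauchy_filter (H : zmodType) (op : set H -> Prop) (F : set H -> Prop) :=
  forall U, nbhd op 0 U -> exists A, F A /\ forall a b, A a -> A b -> U (a - b).

Definition filter_converges (T : Type) (op : set T -> Prop) (F : set T -> Prop) (x : T) :=
  forall U, nbhd op x U -> F U.

Definition complete_group (H : zmodType) (op : set H -> Prop) : Prop :=
  forall F, proper_filter F -> cauchy_filter op F -> exists x, filter_converges op F x.

Definition locally_finite (G : zmodType) (op : set G -> Prop) (A : set G) : Prop :=
  forall K, compact op K -> exists s : list G, forall x, A x -> K x -> List.In x s.

Definition relatively_dense (G : zmodType) (op : set G -> Prop) (A : set G) : Prop :=
  exists K, compact op K /\ forall x, exists a k, A a /\ K k /\ x = a + k.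

Definition discrete (T : Type) (op : set T -> Prop) (A : set T) : Prop :=
  forall x, A x -> exists U, op U /\ U x /\ forall y, U y -> A y -> y = x.

Definition lattice (G : zmodType) (op : set G -> Prop) (A : set G) : Prop :=
  subgroup A /\ discrete op A /\ relatively_dense op A.

Definition cut_and_project (G H : zmodType) (opG : set G -> Prop) (opH : set H -> Prop)
  (Lt : set (G * H)) : Prop :=
  LCA_group opG /\ LCA_group opH /\
  lattice (prod_top opG opH) Lt /\
  (forall p q, Lt p -> Lt q -> p.1 = q.1 -> p = q) /\
  dense opH (fun y => exists x, Lt (x, y)).

Definition P_topology (G : zmodType) (C : R) (P : R -> set G) (L : set G)
  (opL : set G -> Prop) : Prop :=
  group_topology_on L opL /\
  (forall e, Rlt 0 e -> Rlt e C -> nbhd opL 0 (P e)) /\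
  (forall U, nbhd opL 0 U -> exists e, Rlt 0 e /\ Rlt e C /\ forall x, P e x -> U x).

(* (H, phi) is the Hausdorff completion of L w.r.t. the uniform P_eps-topology:
   H is a complete Hausdorff topological abelian group, phi : L -> H is a
   homomorphism with dense image, and the P_eps-uniformity on L is the one
   induced by phi. (phi is given as a function on G; only its values on L matter.) *)
Definition is_completion (G : zmodType) (C : R) (P : R -> set G) (L : set G)
  (H : zmodType) (opH : set H -> Prop) (phi : G -> H) : Prop :=
  group_topology opH /\ hausdorff opH /\ complete_group opH /\
  (forall x y, L x -> L y -> phi (x + y) = phi x + phi y) /\
  dense opH (fun h => exists t, L t /\ h = phi t) /\
  (forall V, nbhd opH 0 V -> exists e, Rlt 0 e /\ Rlt e C /\ forall x, P e x -> V (phi x)) /\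
  (forall e, Rlt 0 e -> Rlt e C ->
     exists V, nbhd opH 0 V /\ forall x, L x -> V (phi x) -> P e x).

Definition Ltilde (G H : zmodType) (L : set G) (phi : G -> H) : set (G * H) :=
  fun p => L p.1 /\ p.2 = phi p.1.

(* By (A1), (A3) and (A5) the sets [P e] form a neighbourhood basis of 0 for a
   group topology on [L], and a group topology is determined by such a basis; a
   completion is obtained from the [P]-Cauchy sequences in [L].  In any completion
   [H] the closures [Pbar e] of [phi (P e)] form a neighbourhood basis of 0, and
   [Pbar (C/4)] is compact: it is closed in the complete group [H], and totally
   bounded by (A2) and (A4).  So [H] is locally compact.  The graph of [phi] is
   discrete in [G x H] by (A2) and Hausdorffness of [G], and relatively dense by
   (A4) and density of [phi L]. *)

From HB Require Import structures.
From mathcomp Require Import all_boot all_algebra.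
From mathcomp Require boolp.
From Stdlib Require Import Reals List Lra.
From Stdlib Require Import Classical ClassicalEpsilon ProofIrrelevance.
From Stdlib Require Import FunctionalExtensionality PropExtensionality.
Import GRing.Theory.
Set Implicit Arguments. Unset Strict Implicit. Unset Printing Implicit Defensive.

Section Mesh.
Local Open Scope R_scope.

Definition mesh (C : R) (n : nat) := C / (8 * (INR n + 1)).

Variable C : R.
Hypothesis C_gt0 : 0 < C.

Lemma mesh_gt0 (n : nat) : 0 < mesh C n.
Proof. by apply: Rdiv_lt_0_compat => //; have := pos_INR n; lra. Qed.

Lemma mesh_decreasing (n m : nat) : (n <= m)%nat -> mesh C m <= mesh C n.
Proof.
move=> /leP nm; apply: Rmult_le_compat_l; first lra.
apply: Rinv_le_contravar; first (have := pos_INR n; lra).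
have := le_INR _ _ nm; lra.
Qed.

Lemma mesh_le (n : nat) : 4 * mesh C n <= C / 2.
Proof. by have := mesh_decreasing (leq0n n); rewrite /mesh /=; lra. Qed.

Lemma mesh_small e : 0 < e -> exists n, 4 * mesh C n < e.
Proof.
move=> e_gt0; have [n [n_inv n_gt0]] := archimed_cor1 (e / C) (Rdiv_lt_0_compat _ _ e_gt0 C_gt0).
have n_pos : 0 < INR n by apply: lt_0_INR.
exists n; rewrite /mesh.
have -> : 4 * (C / (8 * (INR n + 1))) = C * / (2 * (INR n + 1)).
  by field; have := pos_INR n; lra.
have C_n : C * / INR n < e.
  have := Rmult_lt_compat_l C _ _ C_gt0 n_inv.
  by have -> : C * (e / C) = e by field; lra.
apply: Rle_lt_trans C_n; apply: Rmult_le_compat_l; first lra.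
apply: Rinv_le_contravar => //; lra.
Qed.

End Mesh.

Local Open Scope ring_scope.

Section Subgroup.
Variables (M : zmodType) (X : set M).
Hypothesis X_subgroup : subgroup X.

Lemma subgroup0 : X 0. Proof. by case: X_subgroup. Qed.

Lemma subgroupB x y : X x -> X y -> X (x - y).
Proof. by case: X_subgroup => _; apply. Qed.

Lemma subgroupN x : X x -> X (- x).
Proof. by move=> Xx; rewrite -sub0r; apply: subgroupB => //; apply: subgroup0. Qed.

Lemma subgroupD x y : X x -> X y -> X (x + y).
Proof. by move=> Xx Xy; rewrite -(opprK y); apply: subgroupB => //; apply: subgroupN. Qed.

End Subgroup.

Lemma subgroupT (M : zmodType) : subgroup (fun _ : M => True).
Proof. by []. Qed.

Lemma nbhdS (T : Type) (op : set T -> Prop) x (U V : set T) :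
  nbhd op x U -> (forall y, U y -> V y) -> nbhd op x V.
Proof. by move=> [W [oW [Wx WU]]] UV; exists W; split=> //; split=> // y /WU /UV. Qed.

Lemma nbhd_singleton (T : Type) (op : set T -> Prop) x (U : set T) : nbhd op x U -> U x.
Proof. by move=> [W [_ [Wx WU]]]; apply: WU. Qed.

Section Neighbourhoods.
Variables (M : zmodType) (op : set M -> Prop) (X : set M).
Hypotheses (X_subgroup : subgroup X) (op_group : group_topology_on X op).

Lemma nbhd_translate x U : X x -> nbhd op x U <-> nbhd op 0 (fun k => U (x + k)).
Proof.
move=> Xx; have [_ [cont_add _]] := op_group; have X0 := subgroup0 X_subgroup.
split=> [nU | nU].
- have /(cont_add _ _ _ Xx X0) [V [W [nV [nW VW]]]] : nbhd op (x + 0) U by rewrite addr0.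
  by apply: (nbhdS nW) => k; apply: VW; apply: nbhd_singleton nV.
- have : nbhd op (- x + x) (fun k => U (x + k)) by rewrite addNr.
  move=> /(cont_add _ _ _ (subgroupN X_subgroup Xx) Xx) [V [W [nV [nW VW]]]].
  apply: (nbhdS nW) => k /(VW _ _ (nbhd_singleton nV)).
  by rewrite addrA addrN add0r.
Qed.

Lemma nbhd0N U : nbhd op 0 U -> nbhd op 0 (fun k => U (- k)).
Proof.
have [_ [_ cont_opp]] := op_group.
move=> nU; have : nbhd op (- 0) U by rewrite oppr0.
by move=> /(cont_opp _ _ (subgroup0 X_subgroup)) [V [nV VU]]; apply: (nbhdS nV).
Qed.

Lemma nbhd0_split U : nbhd op 0 U -> exists V W, nbhd op 0 V /\ nbhd op 0 W /\
  forall a b, V a -> W b -> U (a + b).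
Proof.
have [_ [cont_add _]] := op_group; have X0 := subgroup0 X_subgroup.
move=> nU; have : nbhd op (0 + 0) U by rewrite addr0.
exact: cont_add.
Qed.

Lemma open_iff_nbhd U : op U <-> (forall x, U x -> X x) /\ forall x, U x -> nbhd op x U.
Proof.
have [[op_sub [_ [op_union _]]] _] := op_group; split.
  by move=> oU; split=> [|x Ux]; [apply: op_sub | exists U].
move=> [UX nU]; pose I := {V : set M | op V /\ forall y, V y -> U y}.
have := op_union I (fun i => proj1_sig i) (fun i => proj1 (proj2_sig i)).
suff -> : (fun x => exists i : I, proj1_sig i x) = U by [].
apply: functional_extensionality => x; apply: propositional_extensionality; split.
  by move=> [[V [oV VU]] /= /VU].
by move=> /nU [V [oV [Vx VU]]]; exists (exist _ V (conj oV VU)).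
Qed.

End Neighbourhoods.

Record scale_on (M : zmodType) (X : set M) (C : R) (B : R -> set M) : Prop := {
  scale0 : forall e, (0 < e)%R -> (e < C)%R -> B e 0;
  scaleN : forall e, (0 < e)%R -> (e < C)%R -> forall x, B e x -> B e (- x);
  scaleD : forall e e', (0 < e)%R -> (0 < e')%R -> (e + e' < C)%R ->
    forall x y, B e x -> B e' y -> B (e + e')%R (x + y);
  scale_sub : forall e, (0 < e)%R -> (e < C)%R -> forall x, B e x -> X x }.

Section Scale.
Variables (M : zmodType) (X : set M) (C : R) (B : R -> set M).
Hypothesis B_scale : scale_on X C B.

Lemma scale_mono e e' x : (0 < e)%R -> (e <= e')%R -> (e' < C)%R -> B e x -> B e' x.
Proof.
move=> e_gt0 ee' e'C Bx; case: (Rle_lt_or_eq_dec _ _ ee') => [lt|<-] //.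
have -> : e' = (e + (e' - e))%R by lra.
rewrite -(addr0 x); apply: (scaleD B_scale) => //; try lra.
by apply: (scale0 B_scale); lra.
Qed.

Lemma scale_half e x y : (0 < e)%R -> (e < C)%R ->
  B (e / 2)%R x -> B (e / 2)%R y -> B e (x + y).
Proof.
move=> e_gt0 eC Bx By; have -> : e = (e / 2 + e / 2)%R by lra.
by apply: (scaleD B_scale) => //; lra.
Qed.

Lemma scaleB e e' x y : (0 < e)%R -> (0 < e')%R -> (e + e' < C)%R ->
  B e x -> B e' y -> B (e + e')%R (x - y).
Proof. by move=> *; apply: (scaleD B_scale) => //; apply: (scaleN B_scale) => //; lra. Qed.

Hypotheses (X_subgroup : subgroup X) (C_gt0 : (0 < C)%R).

Definition scale_open (U : set M) := (forall x, U x -> X x) /\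
  forall x, U x -> exists e, (0 < e)%R /\ (e < C)%R /\ forall k, B e k -> U (x + k).

Lemma scale_topology : is_topology_on X scale_open.
Proof.
split; first by move=> U [].
split.
  split=> // x Xx; exists (C / 2)%R; do 2 (split; first lra).
  move=> k Bk; apply: subgroupD => //; apply: (scale_sub B_scale (e := (C / 2)%R)) Bk; lra.
split.
  move=> I F oF; split; first by move=> x [i /(proj1 (oF i))].
  move=> x [i /(proj2 (oF i)) [e [e_gt0 [eC H]]]].
  by exists e; do 2 (split=> //); move=> k /H; exists i.
move=> U V [UX oU] [VX oV]; split; first by move=> x [/UX].
move=> x [/oU [e [e_gt0 [eC HU]]] /oV [e' [e'_gt0 [e'C HV]]]].
have m_gt0 : (0 < Rmin e e')%R by apply: Rmin_glb_lt.
have mC : (Rmin e e' < C)%R by apply: (Rle_lt_trans _ e); [apply: Rmin_l|].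
exists (Rmin e e'); do 2 (split=> //); move=> k Bk; split.
  by apply: HU; apply: scale_mono Bk => //; apply: Rmin_l.
by apply: HV; apply: scale_mono Bk => //; apply: Rmin_r.
Qed.

Lemma scale_nbhd x U : X x -> nbhd scale_open x U <->
  exists e, (0 < e)%R /\ (e < C)%R /\ forall k, B e k -> U (x + k).
Proof.
move=> Xx; split.
  move=> [V [[_ oV] [Vx VU]]]; have [e [e_gt0 [eC H]]] := oV x Vx.
  by exists e; do 2 (split=> //); move=> k /H /VU.
move=> [e [e_gt0 [eC H]]].
pose V y := X y /\ exists e, (0 < e)%R /\ (e < C)%R /\ forall k, B e k -> U (y + k).
exists V; split; last first.
  split; first by split=> //; exists e.
  move=> y [_ [e1 [e1_gt0 [e1C H1]]]].
  by rewrite -(addr0 y); apply: H1; apply: (scale0 B_scale).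
split; first by move=> y [].
move=> y [Xy [e1 [e1_gt0 [e1C H1]]]].
have h_gt0 : (0 < e1 / 2)%R by lra.
have hC : (e1 / 2 < C)%R by lra.
exists (e1 / 2)%R; do 2 (split=> //); move=> k Bk; split.
  by apply: subgroupD => //; apply: (scale_sub B_scale) Bk.
exists (e1 / 2)%R; do 2 (split=> //); move=> k' Bk'.
by rewrite -addrA; apply: H1; apply: scale_half.
Qed.

Lemma scale_group_topology : group_topology_on X scale_open.
Proof.
pose ball x e a := exists k, B e k /\ a = x + k.
have ball_nbhd x e : X x -> (0 < e)%R -> (e < C)%R -> nbhd scale_open x (ball x e).
  move=> Xx e_gt0 eC; apply/scale_nbhd => //.
  by exists e; do 2 (split=> //); move=> k Bk; exists k.
split; first exact: scale_topology.
split.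
  move=> x y U Xx Xy /(scale_nbhd _ (subgroupD X_subgroup Xx Xy)) [e [e_gt0 [eC H]]].
  exists (ball x (e / 2)%R), (ball y (e / 2)%R).
  split; first by apply: ball_nbhd => //; lra.
  split; first by apply: ball_nbhd => //; lra.
  move=> a b [k [Bk ->]] [k' [Bk' ->]].
  by rewrite addrACA; apply: H; apply: scale_half.
move=> x U Xx /(scale_nbhd _ (subgroupN X_subgroup Xx)) [e [e_gt0 [eC H]]].
exists (ball x e); split; first exact: ball_nbhd.
by move=> a [k [Bk ->]]; rewrite opprD; apply: H; apply: (scaleN B_scale).
Qed.

End Scale.

Lemma nbhd_by_scale (M : zmodType) (X : set M) (op : set M -> Prop) (C : R)
    (B : R -> set M) :
  subgroup X -> group_topology_on X op ->
  (forall e, (0 < e)%R -> (e < C)%R -> nbhd op 0 (B e)) ->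
  (forall U, nbhd op 0 U -> exists e, (0 < e)%R /\ (e < C)%R /\ forall k, B e k -> U k) ->
  forall x U, X x -> nbhd op x U <->
    exists e, (0 < e)%R /\ (e < C)%R /\ forall k, B e k -> U (x + k).
Proof.
move=> X_subgroup op_group B_nbhd B_basis x U Xx.
rewrite (nbhd_translate X_subgroup op_group _ Xx); split; first exact: B_basis.
by move=> [e [e_gt0 [eC H]]]; apply: nbhdS (B_nbhd e e_gt0 eC) _.
Qed.

Section PTopology.
Variables (G : zmodType) (C : R) (P : R -> set G) (L : set G).
Hypotheses (C_gt0 : (0 < C)%R) (L_subgroup : subgroup L) (P_scale : scale_on L C P).

Lemma P_topology_open opL : P_topology C P L opL -> forall U, opL U <-> scale_open L C P U.
Proof.
move=> [opL_group [P_nbhd P_basis]] U.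
have nbhdE := nbhd_by_scale L_subgroup opL_group P_nbhd P_basis.
rewrite (open_iff_nbhd opL_group).
by split=> [] [UL nU]; split=> // x Ux; apply/(nbhdE _ _ (UL x Ux)); apply: nU.
Qed.

Lemma P_topology_exists : exists opL, P_topology C P L opL.
Proof.
have nbhd0E U := scale_nbhd P_scale L_subgroup U (subgroup0 L_subgroup).
exists (scale_open L C P); split; first exact: scale_group_topology.
split=> [e e_gt0 eC | U /nbhd0E [e [e_gt0 [eC H]]]].
  by apply/nbhd0E; exists e; do 2 (split=> //); move=> k; rewrite add0r.
by exists e; do 2 (split=> //); move=> k /H; rewrite add0r.
Qed.

Lemma P_topology_unique opL opL' : P_topology C P L opL -> P_topology C P L opL' ->
  forall U, opL U <-> opL' U.
Proof. by move=> top top' U; rewrite (P_topology_open top) (P_topology_open top'). Qed.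

End PTopology.

Section Completion.
Variables (G : zmodType) (C : R) (P : R -> set G) (L : set G).
Hypotheses (C_gt0 : (0 < C)%R) (L_subgroup : subgroup L) (P_scale : scale_on L C P).

Let P0 := scale0 P_scale.
Let PN := scaleN P_scale.
Let PD := scaleD P_scale.

Definition eventually_in e (s : nat -> G) := exists N, forall n, (N <= n)%nat -> P e (s n).

Definition cauchy_seq (s : nat -> G) := (forall n, L (s n)) /\
  forall e, (0 < e)%R -> (e < C)%R ->
    exists N, forall m n, (N <= m)%nat -> (N <= n)%nat -> P e (s m - s n).

Definition seq_equiv (s t : nat -> G) :=
  forall e, (0 < e)%R -> (e < C)%R -> eventually_in e (fun n => s n - t n).

Lemma eventually_inD e e' s t : (0 < e)%R -> (0 < e')%R -> (e + e' < C)%R ->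
  eventually_in e s -> eventually_in e' t -> eventually_in (e + e') (fun n => s n + t n).
Proof.
move=> e_gt0 e'_gt0 eC [N1 H1] [N2 H2]; exists (maxn N1 N2) => n.
by rewrite geq_max => /andP [/H1 ? /H2 ?]; apply: PD.
Qed.

Lemma eventually_in_mono e e' s : (0 < e)%R -> (e <= e')%R -> (e' < C)%R ->
  eventually_in e s -> eventually_in e' s.
Proof. by move=> e_gt0 ee' e'C [N H]; exists N => n /H; apply: (scale_mono P_scale). Qed.

Lemma seq_equiv_eq s t : (forall n, s n = t n) -> seq_equiv s t.
Proof. by move=> st e e_gt0 eC; exists 0%nat => n _; rewrite st subrr; apply: P0. Qed.

Lemma seq_equiv_sym s t : seq_equiv s t -> seq_equiv t s.
Proof.
move=> st e e_gt0 eC; have [N HN] := st e e_gt0 eC.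
by exists N => n /HN /(PN e_gt0 eC); rewrite opprB.
Qed.

Lemma seq_equivD s s' t t' : seq_equiv s s' -> seq_equiv t t' ->
  seq_equiv (fun n => s n + t n) (fun n => s' n + t' n).
Proof.
move=> ss tt e e_gt0 eC; have -> : e = (e / 2 + e / 2)%R by lra.
have [N H] : eventually_in (e / 2 + e / 2) (fun n => (s n - s' n) + (t n - t' n)).
  by apply: eventually_inD; try lra; [apply: ss | apply: tt]; lra.
by exists N => n /H; rewrite opprD addrACA.
Qed.

Lemma seq_equiv_trans s t u : seq_equiv s t -> seq_equiv t u -> seq_equiv s u.
Proof.
move=> st tu e e_gt0 eC; have [N H] := seq_equivD st tu e_gt0 eC.
by exists N => n /H; rewrite addrKA.
Qed.

Lemma seq_equivN s t : seq_equiv s t -> seq_equiv (fun n => - s n) (fun n => - t n).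
Proof.
move=> st e e_gt0 eC; have [N H] := st e e_gt0 eC.
by exists N => n /H /(PN e_gt0 eC); rewrite opprD.
Qed.

Lemma eventually_in_equiv e e' s t : (0 < e')%R -> (e' < e)%R -> (e < C)%R ->
  seq_equiv s t -> eventually_in e' s -> eventually_in e t.
Proof.
move=> e'_gt0 e'e eC st [N1 H1]; have [N2 H2] := st (e - e')%R ltac:(lra) ltac:(lra).
exists (maxn N1 N2) => n; rewrite geq_max => /andP [/H1 sn /H2 stn].
have -> : t n = s n + - (s n - t n) by rewrite opprB addrC subrK.
have -> : e = (e' + (e - e'))%R by lra.
by apply: PD => //; try lra; apply: PN => //; lra.
Qed.

Lemma cauchy_seq_const x : L x -> cauchy_seq (fun _ => x).
Proof. by move=> Lx; split=> // e e_gt0 eC; exists 0%nat => *; rewrite subrr; apply: P0. Qed.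

Lemma cauchy_seqD s t : cauchy_seq s -> cauchy_seq t -> cauchy_seq (fun n => s n + t n).
Proof.
move=> [Ls cs] [Lt ct]; split=> [n|e e_gt0 eC]; first exact: subgroupD.
have [N1 H1] := cs (e / 2)%R ltac:(lra) ltac:(lra).
have [N2 H2] := ct (e / 2)%R ltac:(lra) ltac:(lra).
exists (maxn N1 N2) => m n; rewrite !geq_max => /andP [m1 m2] /andP [n1 n2].
by rewrite opprD addrACA; apply: (scale_half P_scale) => //; [apply: H1|apply: H2].
Qed.

Lemma cauchy_seqN s : cauchy_seq s -> cauchy_seq (fun n => - s n).
Proof.
move=> [Ls cs]; split=> [n|e e_gt0 eC]; first exact: subgroupN.
have [N HN] := cs e e_gt0 eC; exists N => m n Hm Hn.
by rewrite -opprD; apply: PN => //; apply: HN.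
Qed.

Definition seq_class (s : nat -> G) : set (nat -> G) := fun t => cauchy_seq t /\ seq_equiv s t.

Definition completion_carrier := {S : set (nat -> G) | exists s, cauchy_seq s /\ S = seq_class s}.

Definition completion_repr (S : completion_carrier) : nat -> G :=
  proj1_sig (constructive_indefinite_description _ (proj2_sig S)).

Lemma completion_reprP S :
  cauchy_seq (completion_repr S) /\ proj1_sig S = seq_class (completion_repr S).
Proof. by rewrite /completion_repr; case: constructive_indefinite_description => s /= []. Qed.

Lemma cauchy_repr S : cauchy_seq (completion_repr S).
Proof. by case: (completion_reprP S). Qed.

Definition to_completion s (hs : cauchy_seq s) : completion_carrier :=
  exist _ (seq_class s) (ex_intro _ s (conj hs erefl)).

Lemma to_completion_eq s t (hs : cauchy_seq s) (ht : cauchy_seq t) :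
  seq_equiv s t -> to_completion hs = to_completion ht.
Proof.
move=> st; apply: subset_eq_compat; apply: functional_extensionality => u.
apply: propositional_extensionality; split=> [] [cu su]; split=> //.
  exact: seq_equiv_trans (seq_equiv_sym st) su.
exact: seq_equiv_trans st su.
Qed.

Lemma completion_reprK S : S = to_completion (cauchy_repr S).
Proof. by have [_ E] := completion_reprP S; case: S E => V hV /= E; apply: subset_eq_compat. Qed.

Lemma repr_to_completion s (hs : cauchy_seq s) : seq_equiv s (completion_repr (to_completion hs)).
Proof.
have [cr E] := completion_reprP (to_completion hs).
have : seq_class (completion_repr (to_completion hs)) (completion_repr (to_completion hs)).
  by split=> //; apply: seq_equiv_eq.
by rewrite -E => [[]].
Qed.

Definition completion_zero := to_completion (cauchy_seq_const (subgroup0 L_subgroup)).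
Definition completion_add S T := to_completion (cauchy_seqD (cauchy_repr S) (cauchy_repr T)).
Definition completion_opp S := to_completion (cauchy_seqN (cauchy_repr S)).

Lemma completion_addA : associative completion_add.
Proof.
move=> S T U; apply: to_completion_eq.
apply: seq_equiv_trans (seq_equivD (seq_equiv_eq (fun _ => erefl))
  (seq_equiv_sym (repr_to_completion _))) _.
apply: seq_equiv_trans (seq_equiv_eq (fun n => addrA _ _ _)) _.
exact: seq_equivD (repr_to_completion _) (seq_equiv_eq (fun _ => erefl)).
Qed.

Lemma completion_addC : commutative completion_add.
Proof. by move=> S T; apply: to_completion_eq; apply: seq_equiv_eq => n; rewrite addrC. Qed.

Lemma completion_add0 : left_id completion_zero completion_add.
Proof.
move=> S; rewrite [RHS]completion_reprK; apply: to_completion_eq.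
apply: seq_equiv_trans (seq_equivD (seq_equiv_sym (repr_to_completion _))
  (seq_equiv_eq (fun _ => erefl))) _.
by apply: seq_equiv_eq => n; rewrite add0r.
Qed.

Lemma completion_addN : left_inverse completion_zero completion_opp completion_add.
Proof.
move=> S; apply: to_completion_eq.
apply: seq_equiv_trans (seq_equivD (seq_equiv_sym (repr_to_completion _))
  (seq_equiv_eq (fun _ => erefl))) _.
by apply: seq_equiv_eq => n; rewrite addNr.
Qed.

HB.instance Definition _ := boolp.gen_eqMixin completion_carrier.
HB.instance Definition _ := boolp.gen_choiceMixin completion_carrier.
Definition completion : zmodType := HB.pack completion_carrier
  (GRing.isZmodule.Build completion_carrier
     completion_addA completion_addC completion_add0 completion_addN).

Lemma repr_completionB (S T : completion) : seq_equiv
  (fun n => completion_repr S n - completion_repr T n) (completion_repr (S - T)).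
Proof.
apply: seq_equiv_trans (seq_equivD (seq_equiv_eq (fun _ => erefl))
  (repr_to_completion (cauchy_seqN (cauchy_repr T)))) _.
exact: repr_to_completion.
Qed.

(* The slack [e' < e] absorbs the error made when a representative is replaced
   by an equivalent Cauchy sequence. *)
Definition Phat e (S : completion) :=
  exists e', (0 < e')%R /\ (e' < e)%R /\ eventually_in e' (completion_repr S).

Lemma Phat_intro e e' (S : completion) s : (0 < e')%R -> (e' < e)%R -> (e < C)%R ->
  seq_equiv s (completion_repr S) -> eventually_in e' s -> Phat e S.
Proof.
move=> e'_gt0 e'e eC sS evs; exists ((e + e') / 2)%R; do 2 (split; first lra).
by apply: eventually_in_equiv sS evs => //; lra.
Qed.

Lemma Phat_scale : scale_on (fun _ => True) C Phat.
Proof.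
split=> // [e e_gt0 eC | e e_gt0 eC S [e' [e'_gt0 [e'e [N H]]]]
           | e1 e2 e1_gt0 e2_gt0 eC S T [e1' [? [? ev1]]] [e2' [? [? ev2]]]].
- apply: (Phat_intro (e' := (e / 2)%R) (s := fun _ => 0)); try lra; last first.
    by exists 0%nat => n _; apply: P0; lra.
  exact: repr_to_completion.
- apply: (Phat_intro (e' := e') (s := fun n => - completion_repr S n)) => //.
    exact: repr_to_completion.
  by exists N => n /H; apply: PN; lra.
- apply: (Phat_intro (e' := (e1' + e2')%R) (s := fun n => completion_repr S n +
    completion_repr T n)); try lra; first exact: repr_to_completion.
  by apply: eventually_inD => //; lra.
Qed.

Definition completion_top := scale_open (fun _ : completion => True) C Phat.

Lemma completion_group_topology : group_topology completion_top.
Proof. exact: scale_group_topology Phat_scale (subgroupT _) C_gt0. Qed.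

Lemma completion_nbhd (x : completion) U : nbhd completion_top x U <->
  exists e, (0 < e)%R /\ (e < C)%R /\ forall k, Phat e k -> U (x + k).
Proof. exact: scale_nbhd Phat_scale (subgroupT _) x U I. Qed.

Lemma Phat_all_eq0 (S : completion) : (forall e, (0 < e)%R -> (e < C)%R -> Phat e S) -> S = 0.
Proof.
move=> H; rewrite (completion_reprK S); apply: to_completion_eq => e e_gt0 eC.
have [e' [e'_gt0 [e'e ev]]] := H e e_gt0 eC.
have [N HN] := eventually_in_mono e'_gt0 (Rlt_le _ _ e'e) eC ev.
by exists N => n /HN; rewrite subr0.
Qed.

Lemma completion_hausdorff : hausdorff completion_top.
Proof.
move=> x y xy.
have [e [e_gt0 [eC nB]]] : exists e, (0 < e)%R /\ (e < C)%R /\ ~ Phat e (x - y).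
  apply: NNPP => H; apply: xy; apply/eqP; rewrite -subr_eq0; apply/eqP.
  by apply: Phat_all_eq0 => e e_gt0 eC; apply: NNPP => nB; apply: H; exists e.
pose ball z a := exists k, Phat (e / 2)%R k /\ a = z + k.
have ball_nbhd z : nbhd completion_top z (ball z).
  by apply/completion_nbhd; exists (e / 2)%R; do 2 (split; first lra); move=> k Bk; exists k.
exists (ball x), (ball y); do 2 (split; first exact: ball_nbhd).
move=> z [k [Bk ->]] [k' [Bk' E]]; apply: nB.
have -> : x - y = k' - k by apply/eqP; rewrite subr_eq addrAC [k' + y]addrC -E addrK.
have -> : e = (e / 2 + e / 2)%R by lra.
by apply: (scaleB Phat_scale) => //; lra.
Qed.

(* [embed] is the completion map on [L]; its value outside [L] is irrelevant. *)
Definition embed (x : G) : completion :=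
  match excluded_middle_informative (L x) with
  | left Lx => to_completion (cauchy_seq_const Lx)
  | right _ => 0
  end.

Lemma embedE x (Lx : L x) : embed x = to_completion (cauchy_seq_const Lx).
Proof.
rewrite /embed; case: excluded_middle_informative => [Lx'|//].
by apply: to_completion_eq; apply: seq_equiv_eq.
Qed.

Lemma repr_embed x : L x -> seq_equiv (fun _ => x) (completion_repr (embed x)).
Proof. by move=> Lx; rewrite (embedE Lx); apply: repr_to_completion. Qed.

Lemma embedD x y : L x -> L y -> embed (x + y) = embed x + embed y.
Proof.
move=> Lx Ly; rewrite (embedE (subgroupD L_subgroup Lx Ly)) (embedE Lx) (embedE Ly).
by apply: to_completion_eq; apply: seq_equivD; apply: repr_to_completion.
Qed.

Lemma Phat_embed_sub x s (S : completion) e e' : L x -> (0 < e')%R -> (e' < e)%R ->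
  (e < C)%R -> seq_equiv s (completion_repr S) ->
  eventually_in e' (fun n => x - s n) -> Phat e (embed x - S).
Proof.
move=> Lx e'_gt0 e'e eC sS ev; apply: Phat_intro ev => //.
apply: seq_equiv_trans (repr_completionB _ _).
exact: seq_equivD (repr_embed Lx) (seq_equivN sS).
Qed.

Lemma embed_approx (S : completion) e : (0 < e)%R -> (e < C)%R ->
  exists x, L x /\ Phat e (embed x - S).
Proof.
move=> e_gt0 eC; have [LS cS] := cauchy_repr S.
have [N HN] := cS (e / 2)%R ltac:(lra) ltac:(lra).
exists (completion_repr S N); split=> //.
apply: (Phat_embed_sub (e' := (e / 2)%R) (LS N)); try lra; first exact: seq_equiv_eq.
by exists N => n; apply: HN.
Qed.

Lemma Phat_embed e e' x : (0 < e')%R -> (e' < e)%R -> (e < C)%R -> P e' x -> Phat e (embed x).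
Proof.
move=> e'_gt0 e'e eC Px; have Lx : L x by apply: (scale_sub P_scale) Px; lra.
by apply: (Phat_intro (s := fun _ => x)) e'_gt0 e'e eC (repr_embed Lx) _; exists 0%nat.
Qed.

Lemma Phat_embedP e x : L x -> (0 < e)%R -> (e < C)%R -> Phat e (embed x) -> P e x.
Proof.
move=> Lx e_gt0 eC [e' [e'_gt0 [e'e ev]]].
have [N HN] := eventually_in_equiv e'_gt0 e'e eC (seq_equiv_sym (repr_embed Lx)) ev.
exact: (HN N).
Qed.

Lemma completion_dense : dense completion_top (fun h => exists t, L t /\ h = embed t).
Proof.
move=> U [_ oU] [S US]; have [e [e_gt0 [eC H]]] := oU S US.
have [x [Lx Bx]] := embed_approx S e_gt0 eC.
by exists (embed x); split; [have := H _ Bx; rewrite addrC subrK | exists x].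
Qed.

Lemma completion_P_nbhd V : nbhd completion_top 0 V ->
  exists e, (0 < e)%R /\ (e < C)%R /\ forall x, P e x -> V (embed x).
Proof.
move=> /completion_nbhd [e [e_gt0 [eC H]]]; exists (e / 2)%R; do 2 (split; first lra).
move=> x Px; rewrite -(add0r (embed x)); apply: H.
by apply: (Phat_embed (e' := (e / 2)%R)) => //; lra.
Qed.

Lemma completion_nbhd_P e : (0 < e)%R -> (e < C)%R ->
  exists V, nbhd completion_top 0 V /\ forall x, L x -> V (embed x) -> P e x.
Proof.
move=> e_gt0 eC; exists (Phat e); split; last by move=> x Lx; apply: Phat_embedP.
by apply/completion_nbhd; exists e; do 2 (split=> //); move=> k; rewrite add0r.
Qed.

Lemma cauchy_filter_center F : proper_filter F -> cauchy_filter completion_top F ->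
  forall e, (0 < e)%R -> (e < C)%R -> exists t, L t /\ F (fun y => Phat e (y - embed t)).
Proof.
move=> [_ [F_sup [_ F_proper]]] F_cauchy e e_gt0 eC.
have [A [FA A_small]] : exists A, F A /\ forall a b, A a -> A b -> Phat (e / 2)%R (a - b).
  apply: F_cauchy; apply/completion_nbhd; exists (e / 2)%R; do 2 (split; first lra).
  by move=> k; rewrite add0r.
have [a Aa] : exists a, A a.
  by apply: NNPP => A0; apply: F_proper; apply: F_sup FA _ => a Aa; apply: A0; exists a.
have [t [Lt Bt]] := embed_approx a (e := (e / 2)%R) ltac:(lra) ltac:(lra).
exists t; split=> //; apply: F_sup FA _ => y Ay.
have -> : y - embed t = (y - a) - (embed t - a) by rewrite opprB addrA subrK.
have -> : e = (e / 2 + e / 2)%R by lra.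
by apply: (scaleB Phat_scale); try lra; [apply: A_small | exact: Bt].
Qed.

Lemma embedB x y : L x -> L y -> embed (x - y) = embed x - embed y.
Proof.
move=> Lx Ly; have := embedD (subgroupB L_subgroup Lx Ly) Ly.
by rewrite subrK => ->; rewrite addrK.
Qed.

Lemma completion_complete : complete_group completion_top.
Proof.
move=> F F_proper F_cauchy; have [_ [F_sup [F_cap F_nonempty]]] := F_proper.
have mesh_pos n := mesh_gt0 C_gt0 n; have mesh_le4 n := mesh_le C_gt0 n.
have [t tP] : exists t : nat -> G, forall n,
    L (t n) /\ F (fun y => Phat (mesh C n) (y - embed (t n))).
  apply: (choice (fun n x => L x /\ F (fun y => Phat (mesh C n) (y - embed x)))) => n.
  apply: cauchy_filter_center => //.
  by have := mesh_le4 n; have := mesh_pos n; lra.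
have Lt n : L (t n) by case: (tP n).
have t_close n m : (n <= m)%nat -> P (2 * mesh C n) (t m - t n).
  move=> nm; have := mesh_decreasing C_gt0 nm; have := mesh_le4 n.
  have := mesh_pos n; have := mesh_pos m => ? ? ? ?.
  apply: Phat_embedP; try lra; first exact: subgroupB.
  have [y [ym yn]] : exists y, Phat (mesh C m) (y - embed (t m)) /\
      Phat (mesh C n) (y - embed (t n)).
    apply: NNPP => no_y; apply: F_nonempty.
    by apply: F_sup (F_cap _ _ (proj2 (tP m)) (proj2 (tP n))) _ => y ?; apply: no_y; exists y.
  rewrite embedB //; have -> : embed (t m) - embed (t n) =
        (y - embed (t n)) - (y - embed (t m)) by rewrite opprB [RHS]addrC addrA subrK.
  apply: (scale_mono Phat_scale (e := (mesh C n + mesh C m)%R)); try lra.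
  by apply: (scaleB Phat_scale) => //; lra.
have t_cauchy : cauchy_seq t.
  split=> // e e_gt0 eC; have [n small] := mesh_small C_gt0 e_gt0.
  have := mesh_pos n => ?; exists n => m m' nm nm'.
  have -> : t m - t m' = (t m - t n) - (t m' - t n) by rewrite opprB addrA subrK.
  apply: (scale_mono P_scale (e := (2 * mesh C n + 2 * mesh C n)%R)); try lra.
  by apply: (scaleB P_scale); try lra; apply: t_close.
pose x : completion := to_completion t_cauchy.
exists x => U /completion_nbhd [e [e_gt0 [eC H]]].
have [n small] := mesh_small C_gt0 e_gt0; have := mesh_pos n => ?.
apply: F_sup (proj2 (tP n)) _ => y yn.
rewrite -(subrK x y) addrC; apply: H.
have -> : y - x = (y - embed (t n)) + (embed (t n) - x) by rewrite addrA subrK.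
apply: (scale_mono Phat_scale (e := (mesh C n + 3 * mesh C n)%R)); try lra.
apply: (scaleD Phat_scale) => //; try lra.
apply: (Phat_embed_sub (e' := (2 * mesh C n)%R) (Lt n)); try lra.
  exact: repr_to_completion.
exists n => m nm; rewrite -opprB; apply: PN; try lra; exact: t_close.
Qed.

Lemma completion_exists : exists (H : zmodType) (opH : set H -> Prop) (phi : G -> H),
  is_completion C P L opH phi.
Proof.
exists completion, completion_top, embed.
split; first exact: completion_group_topology.
split; first exact: completion_hausdorff.
split; first exact: completion_complete.
split; first exact: embedD.
split; first exact: completion_dense.
split; first exact: completion_P_nbhd.
exact: completion_nbhd_P.
Qed.

End Completion.

Definition finitely_covered (T I : Type) (F : I -> set T) (S : set T) :=
  exists s : list I, forall x, S x -> exists i, List.In i s /\ F i x.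

Lemma finitely_covered_union (T I J : Type) (F : I -> set T) (S : J -> set T) (l : list J) :
  (forall j, List.In j l -> finitely_covered F (S j)) ->
  finitely_covered F (fun x => exists j, List.In j l /\ S j x).
Proof.
elim: l => [|j l IH] Hl; first by exists nil => x [j [[] _]].
have [s1 H1] := Hl j (or_introl erefl).
have [s2 H2] := IH (fun j' Hj' => Hl j' (or_intror Hj')).
exists (s1 ++ s2) => x [j' [[<-|Hj'] Sx]].
  by have [i [Hi Fi]] := H1 x Sx; exists i; split=> //; apply: List.in_or_app; left.
have [i [Hi Fi]] := H2 x (ex_intro _ j' (conj Hj' Sx)).
by exists i; split=> //; apply: List.in_or_app; right.
Qed.

Lemma open_finite_cap (T J : Type) (op : set T -> Prop) (f : J -> set T) a (l : list J) :
  is_topology op -> (forall j, op (f j)) -> (forall j, f j a) ->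
  exists O, op O /\ O a /\ forall x, O x -> forall j, List.In j l -> f j x.
Proof.
move=> [_ [opT [_ op_cap]]] op_f f_a; elim: l => [|j l [O [oO [Oa HO]]]].
  by exists (fun _ => True); split=> //; split=> // x _ j [].
exists (fun x => O x /\ f j x); split; first exact: op_cap (op_f j).
by split=> // x [Ox fx] j' [<-|Hj'] //; apply: HO.
Qed.

Section ProductCompact.
Variables (A B : Type) (opA : set A -> Prop) (opB : set B -> Prop).
Variables (KA : set A) (KB : set B) (I : Type) (F : I -> set (A * B)).
Hypotheses (opA_top : is_topology opA) (KB_compact : compact opB KB).
Hypothesis F_open : forall i, prod_top opA opB (F i).

Lemma tube_lemma a : (forall b, KB b -> exists i, F i (a, b)) ->
  exists N, opA N /\ N a /\ finitely_covered F (fun q => N q.1 /\ KB q.2).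
Proof.
move=> cover_a.
pose J := {j : I * set A * set B | opA j.1.2 /\ opB j.2 /\ j.1.2 a /\
  forall x y, j.1.2 x -> j.2 y -> F j.1.1 (x, y)}.
have cover_J b : KB b -> exists j : J, (proj1_sig j).2 b.
  move=> /cover_a [i /F_open [U [V [oU [oV [Ua [Vb box]]]]]]].
  by exists (exist _ (i, U, V) (conj oU (conj oV (conj Ua box)))).
have [js Hjs] := @KB_compact J (fun j : J => (proj1_sig j).2)
  (fun j => proj1 (proj2 (proj2_sig j))) cover_J.
have [O [oO [Oa HO]]] := open_finite_cap (f := fun j : J => (proj1_sig j).1.2) (a := a) js opA_top
  (fun j => proj1 (proj2_sig j)) (fun j => proj1 (proj2 (proj2 (proj2_sig j)))).
exists O; do 2 (split=> //).
exists (List.map (fun j : J => (proj1_sig j).1.1) js) => [[x y]] /= [Ox KBy].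
have [j [Hj Vy]] := Hjs y KBy.
exists (proj1_sig j).1.1; split; first exact: List.in_map.
exact: (proj2 (proj2 (proj2 (proj2_sig j))) x y (HO x Ox j Hj) Vy).
Qed.

Lemma setX_finitely_covered : compact opA KA ->
  (forall q, KA q.1 -> KB q.2 -> exists i, F i q) ->
  finitely_covered F (fun q => KA q.1 /\ KB q.2).
Proof.
move=> KA_compact cover.
pose J := {N : set A | opA N /\ finitely_covered F (fun q => N q.1 /\ KB q.2)}.
have cover_J a : KA a -> exists N : J, proj1_sig N a.
  move=> KAa; have [N [oN [Na fN]]] := tube_lemma (fun b KBb => cover (a, b) KAa KBb).
  by exists (exist _ N (conj oN fN)).
have [Ns HNs] := KA_compact J (fun N => proj1_sig N) (fun N => proj1 (proj2_sig N)) cover_J.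
have [s Hs] := finitely_covered_union (S := fun (N : J) q => proj1_sig N q.1 /\ KB q.2)
  (l := Ns) (fun N _ => proj2 (proj2_sig N)).
exists s => q [KAq KBq]; apply: Hs.
by have [N [HN Nq]] := HNs q.1 KAq; exists N.
Qed.

End ProductCompact.

Lemma compact_setX (A B : Type) (opA : set A -> Prop) (opB : set B -> Prop)
    (KA : set A) (KB : set B) :
  is_topology opA -> compact opA KA -> compact opB KB ->
  compact (prod_top opA opB) (fun q => KA q.1 /\ KB q.2).
Proof.
move=> opA_top KA_compact KB_compact I F F_open cover.
exact: setX_finitely_covered opA_top KB_compact F_open KA_compact
  (fun q KAq KBq => cover q (conj KAq KBq)).
Qed.

Lemma not_finitely_covered_piece (T I J : Type) (F : I -> set T) (S : set T)
    (piece : J -> set T) (l : list J) :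
  (forall x, S x -> exists j, List.In j l /\ piece j x) -> ~ finitely_covered F S ->
  exists j, ~ finitely_covered F (fun x => S x /\ piece j x).
Proof.
move=> S_cover S_nfc; apply: NNPP => all_fc; apply: S_nfc.
have [s Hs] := finitely_covered_union (S := fun j x => S x /\ piece j x) (l := l)
  (fun j _ => NNPP _ (fun nfc => all_fc (ex_intro _ j nfc))).
exists s => x Sx; apply: Hs.
by have [j [Hj Px]] := S_cover x Sx; exists j.
Qed.

Section Translation.
Variables (M : zmodType) (op : set M -> Prop).
Hypothesis op_group : group_topology op.

Lemma open_translate (U : set M) c : op U -> op (fun y => U (y + c)).
Proof.
move=> oU; apply/(open_iff_nbhd op_group); split=> // y Uy.
have /(nbhd_translate (subgroupT M) op_group _ I) nU : nbhd op (y + c) U by exists U.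
by apply/(nbhd_translate (subgroupT M) op_group _ I); apply: nbhdS nU _ => k; rewrite addrAC.
Qed.

Lemma compact_translate (K : set M) c : compact op K -> compact op (fun y => K (y - c)).
Proof.
move=> K_compact I F F_open cover.
have [||s Hs] := @K_compact I (fun i y => F i (y + c)).
- by move=> i; apply: open_translate.
- by move=> y Ky; apply: cover; rewrite addrK.
by exists s => y /Hs [i [Hi]]; rewrite subrK => Fy; exists i.
Qed.

End Translation.

Lemma hausdorff_isolate (T : Type) (op : set T -> Prop) (x : T) (s : list T) :
  is_topology op -> hausdorff op ->
  exists O, op O /\ O x /\ forall z, List.In z s -> z <> x -> ~ O z.
Proof.
move=> [_ [opT [_ op_cap]]] op_hausdorff.
elim: s => [|z s [O [oO [Ox HO]]]]; first by exists (fun _ => True); split=> //; split.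
case: (classic (z = x)) => [->|zx].
  by exists O; do 2 (split=> //); move=> w [<- /(_ erefl) []|Hw]; apply: HO.
have [U [V [[U' [oU' [U'x U'U]]] [nV UV]]]] := op_hausdorff x z (fun e => zx (esym e)).
exists (fun y => O y /\ U' y); split; first exact: op_cap.
split=> // w [<-|Hw] wx [Ow U'w]; last exact: HO w Hw wx Ow.
exact: UV _ (U'U _ U'w) (nbhd_singleton nV).
Qed.

Section TotallyBounded.
Variables (H : zmodType) (op : set H -> Prop) (C : R) (W : R -> set H).
Hypotheses (op_complete : complete_group op) (C_gt0 : (0 < C)%R).
Hypothesis W_scale : scale_on (fun _ => True) C W.
Hypothesis nbhdE : forall x U, nbhd op x U <->
  exists e, (0 < e)%R /\ (e < C)%R /\ forall k, W e k -> U (x + k).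

Lemma cauchy_seq_limit (k : nat -> H) :
  (forall e, (0 < e)%R -> (e < C)%R ->
     exists N, forall m n, (N <= m)%nat -> (N <= n)%nat -> W e (k m - k n)) ->
  exists x, forall e, (0 < e)%R -> (e < C)%R ->
     exists N, forall m, (N <= m)%nat -> W e (k m - x).
Proof.
move=> k_cauchy; pose tails A := exists N, forall m, (N <= m)%nat -> A (k m).
have [||x k_lim] := op_complete (F := tails).
- split; first by exists 0%nat.
  split; first by move=> A B [N HN] AB; exists N => m /HN /AB.
  split; last by move=> [N /(_ N (leqnn N))].
  move=> A B [N1 H1] [N2 H2]; exists (maxn N1 N2) => m.
  by rewrite geq_max => /andP [/H1 ? /H2 ?].
- move=> U /nbhdE [e [e_gt0 [eC HU]]]; have [N HN] := k_cauchy e e_gt0 eC.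
  exists (fun y => exists m, (N <= m)%nat /\ y = k m).
  split; first by exists N => m Nm; exists m.
  by move=> a b [m [Nm ->]] [n [Nn ->]]; rewrite -[_ - _]add0r; apply: HU; apply: HN.
exists x => e e_gt0 eC; apply: (k_lim (fun y => W e (y - x))); apply/nbhdE.
by exists e; do 2 (split=> //); move=> j; rewrite addrC addKr.
Qed.

Section Compactness.
Variable K : set H.
Hypothesis K_totally_bounded : forall d, (0 < d)%R -> (d < C)%R ->
  exists s : list H, forall h, K h -> exists a, List.In a s /\ W d (h - a).
Hypothesis K_closed : forall x,
  (forall d, (0 < d)%R -> (d < C)%R -> exists y, K y /\ W d (x - y)) -> K x.
Variables (I : Type) (F : I -> set H).

Definition refinement n (S T : set H) := (forall y, T y -> S y) /\
  ((forall y, S y -> K y) -> ~ finitely_covered F S -> ~ finitely_covered F T) /\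
  (forall y z, T y -> T z -> W (2 * mesh C n) (y - z)).

Lemma refinement_exists n S : exists T, refinement n S T.
Proof.
have d_gt0 := mesh_gt0 C_gt0 n; have := mesh_le C_gt0 n => d_le.
case: (classic ((forall y, S y -> K y) /\ ~ finitely_covered F S)) => [[SK S_nfc]|]; last first.
  move=> not_both; exists (fun _ => False); do 2 (split=> //).
  by move=> SK S_nfc; exfalso; apply: not_both.
have [s net] := K_totally_bounded d_gt0 ltac:(lra).
have [c c_nfc] := not_finitely_covered_piece (fun y Sy => net y (SK y Sy)) S_nfc.
exists (fun y => S y /\ W (mesh C n) (y - c)); split; first by move=> y [].
split=> // y z [_ Wy] [_ Wz].
have -> : y - z = (y - c) - (z - c) by rewrite opprB addrA subrK.
by rewrite -Rplus_diag; apply: (scaleB W_scale) => //; lra.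
Qed.

Lemma shrinking_uncovered : ~ finitely_covered F K ->
  exists Q : nat -> set H, (forall n m y, (n <= m)%nat -> Q m y -> Q n y) /\
    (forall n y, Q n y -> K y) /\
    (forall n, ~ finitely_covered F (Q n)) /\
    (forall n y z, Q n y -> Q n z -> W (2 * mesh C n) (y - z)).
Proof.
move=> K_nfc.
have [next nextP] := choice (fun p T => refinement p.1 p.2 T)
  (fun p => refinement_exists p.1 p.2).
pose Q := fix Q n := match n with 0 => next (0%nat, K) | n'.+1 => next (n'.+1, Q n') end.
have QK n y : Q n y -> K y.
  by elim: n y => [|n IH] y /(proj1 (nextP _)) //; apply: IH.
exists Q; split.
  move=> n m y; elim: m y => [|m IH] y; first by rewrite leqn0 => /eqP ->.
  by rewrite leq_eqVlt ltnS => /orP [/eqP -> // | nm /(proj1 (nextP _)) /IH]; apply.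
split=> //; split; last by case=> [|n] y z; apply: (proj2 (proj2 (nextP _))).
elim=> [|n IH]; first exact: (proj1 (proj2 (nextP (0%nat, K)))) (fun y Ky => Ky) K_nfc.
exact: (proj1 (proj2 (nextP (n.+1, Q n)))) (QK n) IH.
Qed.

Lemma totally_bounded_finitely_covered : (forall i, op (F i)) ->
  (forall x, K x -> exists i, F i x) -> finitely_covered F K.
Proof.
move=> F_open cover; apply: NNPP => K_nfc.
have mesh_pos n := mesh_gt0 C_gt0 n; have mesh_le4 n := mesh_le C_gt0 n.
have [Q [Q_mono [QK [Q_nfc Q_small]]]] := shrinking_uncovered K_nfc.
have [k kQ] : exists k : nat -> H, forall n, Q n (k n).
  apply: (choice (fun n y => Q n y)) => n; apply: NNPP => Q_empty; apply: (Q_nfc n).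
  by exists nil => y Qy; exfalso; apply: Q_empty; exists y.
have [|x k_lim] := @cauchy_seq_limit k.
  move=> e e_gt0 eC; have [n small] := mesh_small C_gt0 e_gt0.
  have := mesh_pos n => ?; exists n => m m' nm nm'.
  apply: (scale_mono W_scale (e := (2 * mesh C n)%R)); try lra.
  by apply: Q_small; [apply: Q_mono nm (kQ m) | apply: Q_mono nm' (kQ m')].
have Kx : K x.
  apply: K_closed => d d_gt0 dC; have [N HN] := k_lim d d_gt0 dC.
  exists (k N); split; first exact: QK (kQ N).
  by rewrite -opprB; apply: (scaleN W_scale) => //; apply: HN.
have [i Fix] := cover x Kx.
have /nbhdE [e [e_gt0 [eC He]]] : nbhd op x (F i) by exists (F i); split.
have [n small] := mesh_small C_gt0 e_gt0; have := mesh_pos n => ?.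
have [N HN] := k_lim (mesh C n) (mesh_pos n) ltac:(have := mesh_le4 n; lra).
apply: (Q_nfc n); exists (i :: nil) => y Qy; exists i; split; first by left.
rewrite -(subrK x y) addrC; apply: He.
have -> : y - x = (y - k (maxn N n)) + (k (maxn N n) - x) by rewrite addrA subrK.
apply: (scale_mono W_scale (e := (2 * mesh C n + mesh C n)%R)); try lra.
apply: (scaleD W_scale); try lra; last by apply: HN; rewrite leq_maxl.
by apply: Q_small Qy (Q_mono _ _ _ (leq_maxr N n) (kQ _)).
Qed.

End Compactness.

Lemma compact_of_totally_bounded (K : set H) :
  (forall d, (0 < d)%R -> (d < C)%R ->
     exists s : list H, forall h, K h -> exists a, List.In a s /\ W d (h - a)) ->
  (forall x, (forall d, (0 < d)%R -> (d < C)%R -> exists y, K y /\ W d (x - y)) -> K x) ->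
  compact op K.
Proof. by move=> K_tb K_closed I F; apply: totally_bounded_finitely_covered. Qed.

End TotallyBounded.

Section AnyCompletion.
Variables (G : zmodType) (opG : set G -> Prop) (C : R) (P : R -> set G) (L : set G).
Hypotheses (C_gt0 : (0 < C)%R) (L_subgroup : subgroup L) (P_scale : scale_on L C P).
Variables (H : zmodType) (opH : set H -> Prop) (phi : G -> H).
Hypotheses (opH_group : group_topology opH) (opH_complete : complete_group opH).
Hypothesis phiD : forall x y, L x -> L y -> phi (x + y) = phi x + phi y.
Hypothesis phi_dense : dense opH (fun h => exists t, L t /\ h = phi t).
Hypothesis phi_P_nbhd : forall V, nbhd opH 0 V ->
  exists e, (0 < e)%R /\ (e < C)%R /\ forall x, P e x -> V (phi x).
Hypothesis P_phi_nbhd : forall e, (0 < e)%R -> (e < C)%R ->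
  exists V, nbhd opH 0 V /\ forall x, L x -> V (phi x) -> P e x.

Lemma phi0 : phi 0 = 0.
Proof.
have := phiD (subgroup0 L_subgroup) (subgroup0 L_subgroup).
by rewrite addr0 => /eqP; rewrite -subr_eq subrr eq_sym => /eqP.
Qed.

Lemma phiN x : L x -> phi (- x) = - phi x.
Proof.
move=> Lx; have := phiD Lx (subgroupN L_subgroup Lx).
by rewrite subrr phi0 => /eqP; rewrite eq_sym addrC addr_eq0 => /eqP.
Qed.

Lemma phiB x y : L x -> L y -> phi (x - y) = phi x - phi y.
Proof. by move=> Lx Ly; rewrite phiD ?phiN //; apply: subgroupN. Qed.

Definition Pbar e : set H := fun h => forall U, opH U -> U h -> exists t, P e t /\ U (phi t).

Lemma Pbar_nbhd e : (0 < e)%R -> (e < C)%R -> nbhd opH 0 (Pbar e).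
Proof.
move=> e_gt0 eC; have [V [[O [oO [O0 OV]]] VP]] := P_phi_nbhd e_gt0 eC.
have [[_ [_ [_ opH_cap]]] _] := opH_group.
exists O; do 2 (split=> //); move=> h Oh U oU Uh.
have [y [[Uy Oy] [t [Lt Ey]]]] := phi_dense (opH_cap _ _ oU oO) (ex_intro _ h (conj Uh Oh)).
by subst y; exists t; split=> //; apply: VP => //; apply: OV.
Qed.

Lemma Pbar_basis U : nbhd opH 0 U ->
  exists e, (0 < e)%R /\ (e < C)%R /\ forall k, Pbar e k -> U k.
Proof.
move=> /(nbhd0_split (subgroupT H) opH_group) [V [V' [nV [nV' VV']]]].
have [e [e_gt0 [eC PV]]] := phi_P_nbhd nV.
exists e; do 2 (split=> //); move=> h Ph.
have : nbhd opH h (fun y => V' (h - y)).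
  apply/(nbhd_translate (subgroupT H) opH_group _ I).
  by apply: nbhdS (nbhd0N (subgroupT H) opH_group nV') _ => k; rewrite opprD addNKr.
move=> [O [oO [Oh OV']]]; have [t [Pt Ot]] := Ph O oO Oh.
by have := VV' _ _ (PV t Pt) (OV' _ Ot); rewrite addrC subrK.
Qed.

Lemma Pbar_scale : scale_on (fun _ => True) C Pbar.
Proof.
have [_ [cont_add cont_opp]] := opH_group.
split=> // [e e_gt0 eC | e e_gt0 eC h Ph U oU Uh | e e' e_gt0 e'_gt0 eC h h' Ph Ph' U oU Uh].
- exact: nbhd_singleton (Pbar_nbhd e_gt0 eC).
- have /(cont_opp _ _ I) [V [[O [oO [Oh OV]]] VU]] : nbhd opH (- h) U by exists U.
  have [t [Pt Ot]] := Ph O oO Oh; exists (- t); split; first exact: (scaleN P_scale).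
  by rewrite phiN; [apply: VU; apply: OV | apply: (scale_sub P_scale) Pt].
- have /(cont_add _ _ _ I I) [V [V' [[O [oO [Oh OV]]] [[O' [oO' [Oh' OV']]] VV']]]] :
    nbhd opH (h + h') U by exists U.
  have [t [Pt Ot]] := Ph O oO Oh; have [t' [Pt' Ot']] := Ph' O' oO' Oh'.
  exists (t + t'); split; first exact: (scaleD P_scale).
  rewrite phiD; first exact: VV' (OV _ Ot) (OV' _ Ot').
    by apply: (scale_sub P_scale) Pt; lra.
  by apply: (scale_sub P_scale) Pt'; lra.
Qed.

Lemma nbhd_Pbar x U : nbhd opH x U <->
  exists e, (0 < e)%R /\ (e < C)%R /\ forall k, Pbar e k -> U (x + k).
Proof. exact: nbhd_by_scale (subgroupT H) opH_group Pbar_nbhd Pbar_basis x U I. Qed.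

Lemma Pbar_phi e t : P e t -> Pbar e (phi t).
Proof. by move=> Pt U oU Ut; exists t. Qed.

Lemma Pbar_approx e h d : Pbar e h -> (0 < d)%R -> (d < C)%R ->
  exists t, P e t /\ Pbar d (h - phi t).
Proof.
move=> Ph d_gt0 dC.
have : nbhd opH h (fun y => Pbar d (h - y)).
  apply/nbhd_Pbar; exists d; do 2 (split=> //); move=> k Pk.
  by rewrite opprD addNKr; apply: (scaleN Pbar_scale).
by move=> [O [oO [Oh OP]]]; have [t [Pt Ot]] := Ph O oO Oh; exists t; split=> //; apply: OP.
Qed.

Lemma Pbar_closed e x : (0 < e)%R -> (e < C)%R ->
  (forall d, (0 < d)%R -> (d < C)%R -> exists y, Pbar e y /\ Pbar d (x - y)) -> Pbar e x.
Proof.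
move=> e_gt0 eC x_lim U oU Ux.
have [d [d_gt0 [dC Hd]]] : exists d, (0 < d)%R /\ (d < C)%R /\ forall k, Pbar d k -> U (x + k).
  by apply/nbhd_Pbar; exists U.
have [y [Py Pxy]] := x_lim (d / 2)%R ltac:(lra) ltac:(lra).
have [t [Pt Pyt]] := Pbar_approx Py (d := (d / 2)%R) ltac:(lra) ltac:(lra).
exists t; split=> //.
have -> : phi t = x + - ((x - y) + (y - phi t)) by rewrite addrA subrK opprB addrC subrK.
apply: Hd; apply: (scaleN Pbar_scale) => //.
by apply: (scale_half Pbar_scale).
Qed.

Hypothesis P_locally_finite :
  forall e, (0 < e)%R -> (e < C)%R -> locally_finite opG (P e).
Hypothesis P_relatively_dense :
  forall e, (0 < e)%R -> (e < C)%R -> relatively_dense opG (P e).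

(* A fine net of [Pbar (C/4)] is the image of the finitely many points of
   [P (C/4 + d/2)] lying in a compact set [K] with [G = P (d/2) + K]. *)
Lemma Pbar_totally_bounded d : (0 < d)%R -> (d < C)%R ->
  exists s : list H, forall h, Pbar (C / 4) h -> exists a, List.In a s /\ Pbar d (h - a).
Proof.
move=> d_gt0 dC.
have [K [K_compact G_cover]] := P_relatively_dense (e := (d / 2)%R) ltac:(lra) ltac:(lra).
have [s s_full] := P_locally_finite (e := (C / 4 + d / 2)%R) ltac:(lra) ltac:(lra) K_compact.
exists (List.map phi s) => h Ph.
have [t [Pt Pht]] := Pbar_approx Ph (d := (d / 2)%R) ltac:(lra) ltac:(lra).
have [a [k [Pa [Kk Et]]]] := G_cover t; subst t.
have Pk : P (C / 4 + d / 2)%R k.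
  have -> : k = (a + k) - a by rewrite addrC addKr.
  by apply: (scaleB P_scale) => //; lra.
have La : L a by apply: (scale_sub P_scale) Pa; lra.
have Lk : L k by apply: (scale_sub P_scale) Pk; lra.
exists (phi k); split; first by apply: List.in_map; apply: s_full.
have -> : h - phi k = (h - phi (a + k)) + phi a by rewrite phiD // opprD addrA addrAC subrK.
by apply: (scale_half Pbar_scale) => //; apply: Pbar_phi.
Qed.

Lemma Pbar_compact : compact opH (Pbar (C / 4)).
Proof.
apply: (compact_of_totally_bounded opH_complete C_gt0 Pbar_scale nbhd_Pbar).
  exact: Pbar_totally_bounded.
by move=> x; apply: Pbar_closed; lra.
Qed.

Lemma completion_locally_compact : locally_compact opH.
Proof.
move=> x; exists (fun y => Pbar (C / 4) (y - x)); split.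
  by apply: compact_translate => //; apply: Pbar_compact.
apply/nbhd_Pbar; exists (C / 4)%R; do 2 (split; first lra).
by move=> k; rewrite addrC addKr.
Qed.

Hypothesis opG_LCA : LCA_group opG.

Lemma Ltilde_subgroup : subgroup (Ltilde L phi).
Proof.
split; first by split; [apply: subgroup0 | rewrite /= phi0].
move=> [x1 x2] [y1 y2] [/= Lx ->] [/= Ly ->]; split=> /=; first exact: subgroupB.
by rewrite phiB.
Qed.

(* Near [0], [P (C/2)] has finitely many points, which Hausdorffness separates
   from [0]; and [phi t] near [0] forces [t] into [P (C/2)]. *)
Lemma Ltilde_discrete : discrete (prod_top opG opH) (Ltilde L phi).
Proof.
have [opG_group [opG_hausdorff opG_lc]] := opG_LCA; have [opG_top _] := opG_group.
have [K [K_compact [V [oV [V0 VK]]]]] := opG_lc 0.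
have [s s_full] := P_locally_finite (e := (C / 2)%R) ltac:(lra) ltac:(lra) K_compact.
have [O [oO [O0 Os]]] := hausdorff_isolate 0 s opG_top opG_hausdorff.
have [_ [_ [_ opG_cap]]] := opG_top.
pose OG y := V y /\ O y.
have OG_open : opG OG by apply: opG_cap.
have OG_P t : P (C / 2)%R t -> OG t -> t = 0.
  by move=> Pt [Vt Ot]; apply: NNPP => t0; apply: (Os t) => //; apply: s_full => //; apply: VK.
have [VH [[OH [oOH [OH0 OHV]]] VH_P]] := P_phi_nbhd (e := (C / 2)%R) ltac:(lra) ltac:(lra).
move=> [x b] [/= Lx Eb]; subst b.
exists (fun q : G * H => OG (q.1 + - x) /\ OH (q.2 + - phi x)); split.
  move=> [a b] /= [Oa Ob].
  exists (fun a => OG (a + - x)), (fun b => OH (b + - phi x)).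
  have := open_translate opG_group (- x) OG_open.
  by have := open_translate opH_group (- phi x) oOH.
split; first by rewrite /= !subrr.
move=> [t b] /= [Ot Ob] [/= Lt Eb]; subst b.
have Ltx : L (t - x) by apply: subgroupB.
suff /subr0_eq -> : t - x = 0 by [].
by apply: OG_P => //; apply: VH_P => //; apply: OHV; rewrite phiB.
Qed.

(* [G = P (C/8) + K] and [phi (L)] is dense, so [G x H = Ltilde + (K x Pbar (C/4))]. *)
Lemma Ltilde_relatively_dense : relatively_dense (prod_top opG opH) (Ltilde L phi).
Proof.
have [K [K_compact G_cover]] := P_relatively_dense (e := (C / 8)%R) ltac:(lra) ltac:(lra).
have [[opG_top _] _] := opG_LCA.
exists (fun q : G * H => K q.1 /\ Pbar (C / 4) q.2); split.
  exact: compact_setX opG_top K_compact Pbar_compact.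
move=> [g h].
have : nbhd opH h (fun y => Pbar (C / 8) (h - y)).
  apply/nbhd_Pbar; exists (C / 8)%R; do 2 (split; first lra).
  by move=> k Pk; rewrite opprD addNKr; apply: (scaleN Pbar_scale) => //; lra.
move=> [O [oO [Oh OP]]].
have [y [Oy [t [Lt Ey]]]] := phi_dense oO (ex_intro _ h Oh); subst y.
have [a [k [Pa [Kk Eg]]]] := G_cover (g - t).
have La : L a by apply: (scale_sub P_scale) Pa; lra.
have Lta : L (t + a) by apply: subgroupD.
exists (t + a, phi (t + a)), (k, h - phi (t + a)).
split; first by [].
split.
  split=> //=; have -> : h - phi (t + a) = (h - phi t) + phi (- a).
    by rewrite phiD // phiN // opprD addrA.
  have -> : (C / 4)%R = (C / 8 + C / 8)%R by lra.
  apply: (scaleD Pbar_scale); try lra; first exact: OP.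
  by apply: Pbar_phi; apply: (scaleN P_scale) => //; lra.
have Eg_sum : g = t + a + k by rewrite -addrA -Eg addrC subrK.
have Eh : h = phi (t + a) + (h - phi (t + a)) by rewrite addrC subrK.
by rewrite {1}Eg_sum {1}Eh.
Qed.

End AnyCompletion.

Theorem theorem2p9 (G : zmodType) (opG : set G -> Prop) (C : R)
  (P : R -> set G) (L : set G) :
  LCA_group opG -> sigma_compact opG -> Rlt 0 C -> subgroup L ->
  (* (A1) *)
  (forall e, Rlt 0 e -> Rlt e C -> P e 0 /\ forall x, P e x <-> P e (- x)) ->
  (* (A2) *)
  (forall e, Rlt 0 e -> Rlt e C -> locally_finite opG (P e)) ->
  (* (A3) *)
  (forall e e', Rlt 0 e -> Rlt 0 e' -> Rlt (Rplus e e') C ->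
     forall x y, P e x -> P e' y -> P (Rplus e e') (x + y)) ->
  (* (A4) *)
  (forall e, Rlt 0 e -> Rlt e C -> relatively_dense opG (P e)) ->
  (* (A5) *)
  (forall e, Rlt 0 e -> Rlt e C -> forall x, P e x -> L x) ->
  ((exists opL, P_topology C P L opL) /\
   (forall opL opL', P_topology C P L opL -> P_topology C P L opL' ->
      forall U, opL U <-> opL' U)) /\
  (exists (H : zmodType) (opH : set H -> Prop) (phi : G -> H),
      is_completion C P L opH phi) /\
  (forall (H : zmodType) (opH : set H -> Prop) (phi : G -> H),
      is_completion C P L opH phi ->
      LCA_group opH /\
      lattice (prod_top opG opH) (Ltilde L phi) /\
      cut_and_project opG opH (Ltilde L phi) /\
      (forall x, (exists y, Ltilde L phi (x, y)) <-> L x) /\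
      (forall x y, Ltilde L phi (x, y) -> y = phi x)).
Proof.
move=> opG_LCA _ C_gt0 L_subgroup A1 A2 A3 A4 A5.
have P_scale : scale_on L C P.
  by split=> // e e_gt0 eC => [|x]; have [P0 PN] := A1 e e_gt0 eC; rewrite // -PN.
split; first by split; [apply: P_topology_exists | apply: P_topology_unique].
split; first exact: completion_exists.
move=> H opH phi [opH_group [opH_hausdorff [opH_complete [phiD [phi_dense [phi_P P_phi]]]]]].
have opH_LCA : LCA_group opH.
  split=> //; split=> //.
  exact: (completion_locally_compact (opG := opG) C_gt0 L_subgroup P_scale opH_group
    opH_complete phiD phi_dense phi_P P_phi A2 A4).
have Lt_lattice : lattice (prod_top opG opH) (Ltilde L phi).
  split; first exact: Ltilde_subgroup.
  split; first exact: (Ltilde_discrete C_gt0 L_subgroup opH_group phiD P_phi A2 opG_LCA).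
  exact: (Ltilde_relatively_dense C_gt0 L_subgroup P_scale opH_group opH_complete phiD
    phi_dense phi_P P_phi A2 A4 opG_LCA).
do 2 (split=> //); split.
  do 3 (split=> //); split; first by move=> [x1 x2] [y1 y2] [/= _ ->] [/= _ ->] /= ->.
  move=> U oU /(phi_dense U oU) [y [Uy [t [Lt Ey]]]].
  by exists y; split=> //; exists t.
split; first by move=> x; split=> [[y []] | Lx] //; exists (phi x).
by move=> x y [].
Qed.
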